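(* Let $p=(p_k)_{k\in\mathbb{N}}$ be a probability mass function with $p_k=0$ for all odd $k$, and let $(G^{(p)}_n)_{n\ge n_p}$ be the disjoint unions of circulant regular graphs described below, with $\phi_n$ a uniformly chosen vertex of $G^{(p)}_n$ and $c\in(0,1)$. Then (a) $\lim_{n\to\infty}\mathbb{P}(d^{(G^{(p)}_n)}_{\phi_n}=k)=p_k$ for every $k$; (b) $R^{(G^{(p)}_n)}_v=1$ for every $n\ge n_p$ and every vertex $v$ of $G^{(p)}_n$.
   Context: For even $k\ge2$ and $N>k$, the circulant graph $G_{k,N}$ has vertex set $\mathbb{Z}/N\mathbb{Z}$, each vertex $i$ being adjacent to $i\pm1,\dots,i\pm k/2$; it is $k$-regular. Let $N_{k,n}=\lfloor np_k\rfloor$ and let $(M_n)$ be a sequence of integers diverging to infinity slowly enough that $N_{k,n}\ge k+1$ for all even $k\in[M_n]$ with $p_k>0$; let $n_p=\min\{n: M_n\ge2\}$. For $n\ge n_p$, $G^{(p)}_n$ is the disjoint union of the graphs $G_{k,N_{k,n}}$ over even $k\in[M_n]$ with $p_k>0$ (it has $n(1+o(1))$ vertices). PageRank with damping factor $c\in(0,1)$ on a finite graph without isolated vertices: $p_{ij}=a_{ij}/d_i$ and $\boldsymbol{R}$ is the unique solution of $\boldsymbol{R}=c\boldsymbol{R}\boldsymbol{P}+(1-c)\boldsymbol{1}$. *)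

From HB Require Import structures.
From mathcomp Require Import all_boot all_order all_algebra.
From mathcomp Require Import all_classical all_reals all_analysis.
Set Implicit Arguments. Unset Strict Implicit. Unset Printing Implicit Defensive.
Import Order.TTheory GRing.Theory Num.Theory.
Local Open Scope ring_scope.

(* N_{k,n} = floor (n p_k)  (for p_k >= 0, truncn = floor) *)
Definition Nkn (R : realType) (p : nat -> R) (n k : nat) : nat :=
  Num.truncn (n%:R * p k).

Definition circ_adj (k N a b : nat) : bool :=
  [exists j : 'I_(k./2).+1, (0 < (j : nat))%N &&
     ((b == (a + j) %% N)%N || (a == (b + j) %% N)%N)].

(* Candidate vertices of G_n^{(p)}: pairs (k, i) with k <= M_n and i < N_{k,n} *)
Definition Vtype (R : realType) (p : nat -> R) (M : nat -> nat) (n : nat) : finType :=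
  {k : 'I_(M n).+1 & 'I_(Nkn p n k)}.

Definition Vset (R : realType) (p : nat -> R) (M : nat -> nat) (n : nat)
  : {set Vtype p M n} :=
  [set v : Vtype p M n | [&& ~~ odd (tag v), (1 <= (tag v : nat))%N & 0 < p (tag v)]].

Definition adj (R : realType) (p : nat -> R) (M : nat -> nat) (n : nat)
  (u v : Vtype p M n) : bool :=
  [&& u \in Vset p M n, v \in Vset p M n, (tag u == tag v)
    & circ_adj (tag u) (Nkn p n (tag u)) (tagged u) (tagged v)].

Definition deg (R : realType) (p : nat -> R) (M : nat -> nat) (n : nat)
  (v : Vtype p M n) : nat :=
  #|[set u in Vset p M n | adj v u]|.

(* P(d_{phi_n} = k) for phi_n uniform on the vertex set *)
Definition prob_deg (R : realType) (p : nat -> R) (M : nat -> nat) (n k : nat) : R :=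
  (#|[set v in Vset p M n | deg v == k]|%:R) / (#|Vset p M n|%:R).

(* R is a PageRank vector (solution of R = c R P + (1-c) 1) with p_ij = a_ij / d_i *)
Definition isPageRank (R : realType) (p : nat -> R) (M : nat -> nat) (n : nat)
  (c : R) (Rk : Vtype p M n -> R) : Prop :=
  forall j, j \in Vset p M n ->
    Rk j = c * (\sum_(i in Vset p M n)
                  Rk i * ((adj i j : nat)%:R / (deg i)%:R)) + (1 - c).

From HB Require Import structures.
From mathcomp Require Import all_boot all_order all_algebra.
From mathcomp Require Import all_classical all_reals all_analysis.
From mathcomp Require Import zify ring lra.
Set Implicit Arguments.
Unset Strict Implicit.
Unset Printing Implicit Defensive.

Import Order.TTheory GRing.Theory Num.Theory.
Import numFieldNormedType.Exports.
Local Open Scope ring_scope.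

(* (a) Every component G_{k,N_{k,n}} with k <= M_n has more than k vertices, so it is
   a genuine k-regular circulant graph and the vertices of degree k are exactly those of
   the k-th component: floor(n p_k) of them among sum_{k <= M_n} floor(n p_k) vertices.
   Divided by n, these counts tend to p_k and to 1 (the p_k sum to 1 and M_n -> oo).
   (b) Adjacent vertices lie in the same component, hence have equal degree, so the
   random-walk matrix P is symmetric and in particular column-stochastic.  Then R - 1
   solves D = c D P, and at a vertex maximising |D| this gives |D| <= c |D|, so D = 0. *)

Lemma modn_lt_addnn x N : (x < N + N)%N -> (x %% N = if x < N then x else x - N)%N.
Proof.
case: ifP => [xN _|xN xNN]; first exact: modn_small.
have -> : x = (x - N + N)%N by lia.
by rewrite modnDr modn_small; lia.
Qed.

Lemma circ_adjC k N a b : circ_adj k N a b = circ_adj k N b a.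
Proof. by apply/existsP/existsP => -[j Hj]; exists j; rewrite orbC. Qed.

Lemma circ_adj_addmod h N a d : (a < N)%N -> (d < N)%N -> (h + h < N)%N ->
  circ_adj h.*2 N a ((a + d) %% N) = ((1 <= d <= h) || (N - h <= d))%N.
Proof.
move=> aN dN hN; rewrite /circ_adj doubleK (@modn_lt_addnn (a + d)); last by lia.
set b := (if _ then _ else _); have bN : (b < N)%N by rewrite /b; case: ifP; lia.
apply/existsP/idP => [[j /andP [j0 /orP [] /eqP]]|/orP [] hd].
- rewrite (@modn_lt_addnn (a + j)); last by have := ltn_ord j; lia.
  by rewrite /b; have := ltn_ord j; case: ifP; case: ifP; lia.
- rewrite (@modn_lt_addnn (b + j)); last by have := ltn_ord j; lia.
  by rewrite /b; have := ltn_ord j; case: ifP; case: ifP; lia.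
- have dh : (d < h.+1)%N by lia.
  by exists (Ordinal dh); rewrite /= (@modn_lt_addnn (a + d)); lia.
- have dh : (N - d < h.+1)%N by lia.
  exists (Ordinal dh); rewrite /= (@modn_lt_addnn (b + (N - d))); last by lia.
  by rewrite /b; case: ifP; case: ifP; lia.
Qed.

Lemma sum_circ_offsets h N : (h + h < N)%N ->
  (\sum_(0 <= d < N) ((1 <= d <= h) || (N - h <= d))%N)%N = h.*2.
Proof.
move=> hN; rewrite big_ltn; last by lia.
rewrite (@big_cat_nat _ _ _ h.+1 1 N) /=; [|lia|lia].
rewrite (@big_cat_nat _ _ _ (N - h) h.+1 N) /=; [|lia|lia].
rewrite (@eq_big_nat _ _ _ 1 h.+1 _ (fun=> 1%N)); last by move=> i Hi; lia.
rewrite (@eq_big_nat _ _ _ h.+1 (N - h) _ (fun=> 0%N)); last by move=> i Hi; lia.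
rewrite (@eq_big_nat _ _ _ (N - h) N _ (fun=> 1%N)); last by move=> i Hi; lia.
by rewrite !sum_nat_const_nat; lia.
Qed.

Lemma card_circ_adj k N (a : 'I_N) : ~~ odd k -> (k < N)%N ->
  #|[set b : 'I_N | circ_adj k N a b]| = k.
Proof.
case: N a => [[]//|N] a k_even kN.
rewrite -(odd_double_half k) (negbTE k_even) add0n in kN *.
have hN : (k./2 + k./2 < N.+1)%N by rewrite addnn.
rewrite -sum1_card big_mkcond /= (reindex_inj (addrI a)) /=.
rewrite -[RHS](@sum_circ_offsets _ _ hN) big_mkord; apply: eq_bigr => d _.
by rewrite inE [nat_of_ord _]/= circ_adj_addmod //; case: ifP.
Qed.

Lemma colstochastic_pagerank_eq1 (R : realFieldType) (T : finType) (V : {set T})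
    (w : T -> T -> R) (c : R) (x : T -> R) :
  0 <= c < 1 -> (forall i j, 0 <= w i j) ->
  (forall j, j \in V -> \sum_(i in V) w i j = 1) ->
  (forall j, j \in V -> x j = c * \sum_(i in V) x i * w i j + (1 - c)) ->
  {in V, forall v, x v = 1}.
Proof.
move=> /andP [c_ge0 c_lt1] w_ge0 w_sum1 x_fix v vV.
pose D i := x i - 1.
have D_fix j : j \in V -> D j = c * \sum_(i in V) D i * w i j.
  move=> jV; rewrite /D {1}x_fix //.
  under [in RHS]eq_bigr do rewrite mulrBl mul1r.
  by rewrite sumrB w_sum1 //; ring.
have [j jV j_max] := arg_maxP (fun i => `|D i|) vV.
have : `|D j| <= c * `|D j|.
  rewrite {1}D_fix // normrM (ger0_norm c_ge0) ler_wpM2l //.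
  rewrite (le_trans (ler_norm_sum _ _ _)) // -[leRHS]mulr1 -(w_sum1 j jV) mulr_sumr.
  apply: ler_sum => i iV; rewrite normrM (ger0_norm (w_ge0 i j)).
  exact: ler_wpM2r (j_max i iV).
move=> Dj_le; have Dj0 : `|D j| <= 0 by have := normr_ge0 (D j); nra.
by apply/eqP; rewrite -subr_eq0 -normr_le0 (le_trans (j_max v vV)).
Qed.

Section CirculantUnion.
Variables (R : realType) (p : nat -> R) (M : nat -> nat).

Definition component (k : nat) : bool := [&& ~~ odd k, (1 <= k)%N & 0 < p k].

Lemma adjC n (u v : Vtype p M n) : adj u v = adj v u.
Proof.
case: u v => [ku a] [kv b]; rewrite /adj /= eq_sym.
have [kvu|] := eqVneq kv ku; last by rewrite !andbF.
by subst kv; rewrite circ_adjC andbCA.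
Qed.

Lemma adj_tag n (u v : Vtype p M n) : adj u v -> tag u = tag v.
Proof. by case/and4P => _ _ /eqP. Qed.

Lemma deg_circ n (v : Vtype p M n) : v \in Vset p M n ->
  deg v = #|[set b : 'I_(Nkn p n (tag v)) |
              circ_adj (tag v) (Nkn p n (tag v)) (tagged v) b]|.
Proof.
case: v => k a vV /=.
have Tagged_inj := @eq_from_Tagged _ (fun k : 'I_(M n).+1 => 'I_(Nkn p n k)) k.
rewrite /deg -[RHS](card_imset _ Tagged_inj).
apply: eq_card => -[k' b]; rewrite [in LHS]inE.
apply/idP/imsetP => [/andP [_ /and4P [_ _ /eqP /= kk' ab]]|[b' ab' E]].
  by subst k'; exists b; rewrite ?inE.
have kk' : k' = k by move/(congr1 tag): E.
subst k'; rewrite -(eq_from_Tagged E) inE in ab'.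
have bV : Tagged (fun k : 'I_(M n).+1 => 'I_(Nkn p n k)) b \in Vset p M n.
  by move: vV; rewrite !inE.
by rewrite /adj vV bV eqxx.
Qed.

Lemma card_Vset_tag n (Q : pred nat) :
  #|[set v in Vset p M n | Q (tag v)]| =
  (\sum_(k < (M n).+1 | component k && Q k) Nkn p n k)%N.
Proof.
rewrite -sum1_card.
under [RHS]eq_bigr do rewrite -[Nkn _ _ _]card_ord -sum1_card.
rewrite (sig_big_dep _ (fun _ _ => true) (fun _ _ => 1%N)) /=.
by apply: eq_bigl => v; rewrite !inE andbT.
Qed.

Hypothesis M_slow : forall n k : nat, ~~ odd k -> (1 <= k <= M n)%N -> 0 < p k ->
  (k.+1 <= Nkn p n k)%N.

Lemma deg_Vset n (v : Vtype p M n) : v \in Vset p M n -> deg v = tag v.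
Proof.
move=> vV; rewrite deg_circ // card_circ_adj //; move: vV; rewrite inE.
  by case/and3P.
case/and3P=> k_even k_ge1 pk_gt0; apply: M_slow => //.
by rewrite k_ge1 -ltnS ltn_ord.
Qed.

Lemma sum_adj_div_deg n j : j \in Vset p M n ->
  \sum_(i in Vset p M n) (adj i j : nat)%:R / (deg i)%:R = 1 :> R.
Proof.
move=> jV; have tag_gt0 : (0 < tag j)%N by move: jV; rewrite inE => /and3P [].
transitivity (\sum_(i in Vset p M n) (adj j i : nat)%:R / (deg j)%:R : R).
  apply: eq_bigr => i iV; rewrite adjC.
  by have [/adj_tag tji|] := boolP (adj j i); rewrite ?mul0r // !deg_Vset ?tji.
rewrite -mulr_suml -natr_sum.
have -> : (\sum_(i in Vset p M n) (adj j i : nat))%N = deg j.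
  rewrite /deg -sum1_card; under [RHS]eq_bigl do rewrite inE.
  by rewrite big_mkcondr.
by rewrite divff // pnatr_eq0 deg_Vset // -lt0n.
Qed.

End CirculantUnion.

Local Open Scope classical_set_scope.
Local Open Scope ring_scope.

Lemma partial_sum_le_lim (R : realType) (u : nat -> R) (l : R) :
  (forall k, 0 <= u k) -> (fun m => \sum_(k < m) u k) @ \oo --> l ->
  forall m, \sum_(k < m) u k <= l.
Proof.
move=> u_ge0 u_cvg m.
have u_nd : nondecreasing_seq (fun m => \sum_(k < m) u k).
  by apply/nondecreasing_seqP => i; rewrite big_ord_recr lerDl.
by rewrite -(cvg_lim _ u_cvg) //; apply: nondecreasing_cvgn_le => //; exact: cvgP u_cvg.
Qed.

Lemma truncn_mul_div_cvg (R : realType) (q : R) : 0 <= q ->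
  (fun n : nat => (Num.truncn (n%:R * q))%:R / n%:R) @ \oo --> q.
Proof.
move=> q_ge0; apply: (@squeeze_cvgr _ _ _ _ (fun n => q - n%:R^-1) (fun=> q)).
- near=> n; have n_gt0 : 0 < n%:R :> R by rewrite ltr0n; near: n; exact: nbhs_infty_gt.
  have /andP [t_le t_gt] : (Num.truncn (n%:R * q))%:R <= n%:R * q
                           < (Num.truncn (n%:R * q)).+1%:R.
    by apply: truncn_itv; rewrite mulr_ge0.
  rewrite -natr1 in t_gt.
  rewrite ler_pdivrMr // ler_pdivlMr // mulrBl mulVf ?gt_eqF //.
  by apply/andP; split; lra.
- rewrite -[X in _ --> X]subr0; apply: cvgB; first exact: cvg_cst.
  apply/gtr0_cvgV0; last exact: cvgr_idn.
  by near=> n; rewrite ltr0n; near: n; exact: nbhs_infty_gt.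
- exact: cvg_cst.
Unshelve. all: by end_near.
Qed.

Section DegreeDistribution.
Variables (R : realType) (p : nat -> R) (M : nat -> nat).
Hypotheses (p_ge0 : forall k, 0 <= p k)
  (p_sum : (fun m : nat => \sum_(k < m) p k) @ \oo --> (1 : R))
  (p0 : p 0%N = 0) (p_odd : forall k, odd k -> p k = 0)
  (M_div : forall B : nat, exists n0 : nat, forall n, (n0 <= n)%N -> (B <= M n)%N)
  (M_slow : forall n k : nat, ~~ odd k -> (1 <= k <= M n)%N -> 0 < p k ->
              (k.+1 <= Nkn p n k)%N).

Lemma M_near_ge B : \forall n \near \oo, (B <= M n)%N.
Proof. by have [n0 Hn0] := M_div B; exists n0. Qed.

Lemma sum_Nkn_le n m : (\sum_(k < m) Nkn p n k)%:R <= n%:R :> R.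
Proof.
rewrite natr_sum (le_trans (y := \sum_(k < m) n%:R * p k)) //.
  by apply: ler_sum => k _; rewrite truncn_le mulr_ge0.
rewrite -mulr_sumr -[leRHS]mulr1 ler_wpM2l //.
by have := partial_sum_le_lim p_ge0 p_sum m.
Qed.

Lemma sum_Nkn_ge n K m : (K <= m)%N ->
  n%:R * (\sum_(k < K) p k) - K%:R <= (\sum_(k < m) Nkn p n k)%:R :> R.
Proof.
move=> Km; rewrite (le_trans (y := (\sum_(k < K) Nkn p n k)%:R)) //; last first.
  by rewrite ler_nat (big_ord_widen _ (Nkn p n) Km) big_mkcond leq_sum // => k _; case: ifP.
have -> : K%:R = \sum_(k < K) 1 :> R by rewrite sumr_const card_ord.
rewrite natr_sum mulr_sumr -sumrB.
by apply: ler_sum => k _; rewrite lerBlDr natr1 ltW // truncnS_gt.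
Qed.

Lemma sum_Nkn_div_cvg1 :
  (fun n => (\sum_(k < (M n).+1) Nkn p n k)%:R / n%:R) @ \oo --> (1 : R).
Proof.
apply/cvgrPdist_lt => e e_gt0.
have e2_gt0 : 0 < e / 2 by rewrite divr_gt0.
have [K _ /(_ K (leqnn K)) /= pK] := (cvgrPdist_lt _ _).1 p_sum (e / 2) e2_gt0.
near=> n.
have n_gt0 : 0 < n%:R :> R by rewrite ltr0n; near: n; exact: nbhs_infty_gt.
have Kn : K%:R < n%:R * (e / 2).
  rewrite -ltr_pdivrMr ?divr_gt0 //; near: n; exact: nbhs_infty_gtr.
have := sum_Nkn_le n (M n).+1; have := @sum_Nkn_ge n K (M n).+1.
have KM : (K <= (M n).+1)%N by apply: leqW; near: n; exact: M_near_ge.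
move=> /(_ KM) S_ge S_le; move: pK; rewrite ltr_norml => /andP [_ pK].
set S := (\sum_(_ < _) _)%:R in S_ge S_le *.
rewrite ger0_norm; last by rewrite subr_ge0 ler_pdivrMr // mul1r.
have -> : 1 - S / n%:R = (n%:R - S) / n%:R by field; rewrite gt_eqF.
rewrite ltr_pdivrMr //; nra.
Unshelve. all: by end_near.
Qed.

Lemma Nkn_noncomponent n k : ~~ component p k -> Nkn p n k = 0%N.
Proof.
move=> k_nc; rewrite /Nkn; suff -> : p k = 0 by rewrite mulr0 truncn0.
move: k_nc; case: k => [_|k]; first exact: p0.
have [/p_odd //|k_even] := boolP (odd k.+1).
by rewrite /component k_even /= lt_def => /nandP [/negbNE /eqP|/negP []].
Qed.

Lemma card_Vset_tagE n (Q : pred nat) :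
  #|[set v in Vset p M n | Q (tag v)]| = (\sum_(k < (M n).+1 | Q k) Nkn p n k)%N.
Proof.
rewrite card_Vset_tag big_mkcondl /=; apply: eq_bigr => k _.
by case: ifP => // /negbT /Nkn_noncomponent ->.
Qed.

Lemma card_Vset n : #|Vset p M n| = (\sum_(k < (M n).+1) Nkn p n k)%N.
Proof.
rewrite -(card_Vset_tagE n xpredT); apply: eq_card => v.
by rewrite [in RHS]inE andbT.
Qed.

Lemma card_deg_eq n k : (k <= M n)%N ->
  #|[set v in Vset p M n | deg v == k]| = Nkn p n k.
Proof.
move=> kM; transitivity #|[set v in Vset p M n | pred1 k (tag v)]|.
  apply: eq_card => v; rewrite !inE; apply: andb_id2l => vV.
  by rewrite (deg_Vset M_slow) // inE.
by rewrite card_Vset_tagE (big_pred1 (Ordinal (kM : k < (M n).+1)%N)).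
Qed.

Lemma prob_deg_cvg k : (fun n => prob_deg p M n k) @ \oo --> p k.
Proof.
have ratio_cvg : (fun n => (Nkn p n k)%:R / n%:R /
    ((\sum_(k' < (M n).+1) Nkn p n k')%:R / n%:R)) @ \oo --> p k / 1.
  exact: cvgM (truncn_mul_div_cvg (p_ge0 k)) (cvgV (oner_neq0 R) sum_Nkn_div_cvg1).
rewrite divr1 in ratio_cvg; apply: cvg_trans ratio_cvg; apply: near_eq_cvg.
near=> n; rewrite /prob_deg card_Vset card_deg_eq; last by near: n; exact: M_near_ge.
rewrite /Nkn /= invfM invrK [_^-1 * _]mulrC mulrA mulfVK // pnatr_eq0 -lt0n.
by near: n; exact: nbhs_infty_gt.
Unshelve. all: by end_near.
Qed.

End DegreeDistribution.

Theorem mainTheorem10 (R : realType) (p : nat -> R) (M : nat -> nat) (c : R)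
  (p_ge0 : forall k, 0 <= p k)
  (p_sum : (fun m : nat => \sum_(k < m) p k) @ \oo --> (1 : R))
  (p0 : p 0%N = 0)
  (p_odd : forall k, odd k -> p k = 0)
  (M_div : forall B : nat, exists n0 : nat, forall n, (n0 <= n)%N -> (B <= M n)%N)
  (M_slow : forall n k : nat, ~~ odd k -> (1 <= k <= M n)%N -> 0 < p k ->
              (k.+1 <= Nkn p n k)%N)
  (c_gt0 : 0 < c) (c_lt1 : c < 1) :
  (forall k : nat, (fun n => prob_deg p M n k) @ \oo --> p k) /\
  (forall n : nat, (2 <= M n)%N ->
     forall Rk : Vtype p M n -> R, isPageRank c Rk ->
     forall v, v \in Vset p M n -> Rk v = 1).
Proof.
split; first exact: prob_deg_cvg.
(* [2 <= M n], i.e. n >= n_p, only makes the graph nonempty; the claim does not need it. *)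
move=> n _ Rk Rk_pagerank.
apply: (colstochastic_pagerank_eq1 (w := fun i j => (adj i j : nat)%:R / (deg i)%:R) _ _ _ Rk_pagerank).
- by rewrite ltW.
- by move=> i j; rewrite divr_ge0.
- exact: sum_adj_div_deg.
Qed.
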